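(* Let $N \ge 1$ and let $-1 \le \tau_0 < \tau_1 < \cdots < \tau_N \le 1$ be distinct points. Let $x$ be continuously differentiable on $[-1,+1]$ and let $x^N \in \mathcal{P}_N$ be the unique polynomial with $x^N(\tau_k) = x(\tau_k)$ for $0 \le k \le N$. Then \[ \|\dot{x}-\dot{x}^N\| \le (1+2N^2)\inf_{q\in\mathcal{P}_N}\|\dot{x}-\dot{q}\| + N^2(1+\Lambda_N)\inf_{p\in\mathcal{P}_N}\|x-p\|, \] where $\Lambda_N$ is the Lebesgue constant of the point set $\{\tau_0,\dots,\tau_N\}$.
   Context: $\mathcal{P}_N$ denotes the space of real polynomials of degree at most $N$, and $\|\cdot\|$ denotes the sup-norm on $[-1,+1]$. A dot denotes differentiation. For a point set $\{\tau_0,\dots,\tau_N\}$ the Lagrange polynomials are $L_i(\tau)=\prod_{j=0,\,j\ne i}^N \frac{\tau-\tau_j}{\tau_i-\tau_j}$, $0\le i\le N$, and the Lebesgue constant is $\Lambda_N=\max\{\sum_{j=0}^N |L_j(\tau)| : \tau\in[-1,1]\}$. *)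

From Stdlib Require Import Reals Lra Lia ClassicalEpsilon.
Open Scope R_scope.

(* Least upper bound of a set of reals (chosen classically; meaningful
   whenever the set is nonempty and bounded above). *)
Definition lub_of (E : R -> Prop) : R :=
  epsilon (inhabits 0) (fun l => is_lub E l).

Definition glb_of (E : R -> Prop) : R :=
  - lub_of (fun y => E (- y)).

Definition sup_norm (f : R -> R) : R :=
  lub_of (fun y => exists t, -1 <= t <= 1 /\ y = Rabs (f t)).

Definition poly_eval (N : nat) (c : nat -> R) (t : R) : R :=
  sum_f_R0 (fun k => c k * t ^ k) N.

Definition poly_deriv (N : nat) (c : nat -> R) (t : R) : R :=
  sum_f_R0 (fun k => INR k * c k * t ^ (pred k)) N.

Definition has_deriv_on_I (f : R -> R) (t l : R) : Prop :=
  forall eps, 0 < eps -> exists delta, 0 < delta /\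
    forall h, h <> 0 -> Rabs h < delta -> -1 <= t + h <= 1 ->
      Rabs ((f (t + h) - f t) / h - l) < eps.

Definition continuous_on_I_at (g : R -> R) (t : R) : Prop :=
  forall eps, 0 < eps -> exists delta, 0 < delta /\
    forall s, -1 <= s <= 1 -> Rabs (s - t) < delta -> Rabs (g s - g t) < eps.

Definition lagrange (N : nat) (tau : nat -> R) (i : nat) (t : R) : R :=
  prod_f_R0 (fun j => if Nat.eqb j i then 1 else (t - tau j) / (tau i - tau j)) N.

Definition lebesgue_const (N : nat) (tau : nat -> R) : R :=
  lub_of (fun y => exists t, -1 <= t <= 1 /\
    y = sum_f_R0 (fun j => Rabs (lagrange N tau j t)) N).

From Stdlib Require Import Reals Lra Lia ClassicalEpsilon Classical.
From Coquelicot Require Import Coquelicot.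
Open Scope R_scope.

(* For any q, p in P_N, put c := x(0) - q(0) and h := q + c - x^N in P_N.  By the
   mean value theorem |x - q - c| <= ||x' - q'||, and by Lagrange interpolation at
   the nodes |x - x^N| <= (1 + Λ_N) ||x - p||, so ||h|| <= ||x' - q'|| + (1 + Λ_N) ||x - p||.
   Markov's inequality ||h'|| <= N^2 ||h|| then bounds x' - (x^N)' = (x' - q') + h'
   by (1 + N^2) ||x' - q'|| + N^2 (1 + Λ_N) ||x - p|| (better than 1 + 2N^2);
   taking infima over q and p gives the claim.  Markov's inequality is proved from
   Bernstein's inequality for trigonometric polynomials, itself derived from Riesz's
   interpolation formula. *)

(* Coquelicot's rules specialised to [R -> R], so that derivatives come out in [Rplus]/[Rmult] form. *)
Lemma is_derive_eq (f g : R -> R) (x a b : R) :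
  is_derive f x a -> (forall t, f t = g t) -> a = b -> is_derive g x b.
Proof. intros Hf Hfg <-. exact (is_derive_ext f g x a Hfg Hf). Qed.

Lemma is_derive_unique_R (f : R -> R) (x a b : R) : is_derive f x a -> is_derive f x b -> a = b.
Proof. intros Ha Hb. now rewrite <- (is_derive_unique _ _ _ Ha), (is_derive_unique _ _ _ Hb). Qed.

Lemma is_derive_const_R (a x : R) : is_derive (fun _ : R => a) x 0.
Proof. exact (@is_derive_const R_AbsRing R_NormedModule a x). Qed.

Lemma is_derive_id_R (x : R) : is_derive (fun t : R => t) x 1.
Proof. exact (@is_derive_id R_AbsRing x). Qed.

Lemma is_derive_plus_R (f g : R -> R) (x a b : R) :
  is_derive f x a -> is_derive g x b -> is_derive (fun t => f t + g t) x (a + b).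
Proof. exact (is_derive_plus f g x a b). Qed.

Lemma is_derive_scal_R (f : R -> R) (k x a : R) :
  is_derive f x a -> is_derive (fun t => k * f t) x (k * a).
Proof. exact (is_derive_scal f x k a). Qed.

Lemma is_derive_comp_R (f g : R -> R) (x a b : R) :
  is_derive f (g x) a -> is_derive g x b -> is_derive (fun t => f (g t)) x (b * a).
Proof. exact (is_derive_comp f g x a b). Qed.

Lemma is_derive_mult_R (f g : R -> R) (x a b : R) :
  is_derive f x a -> is_derive g x b -> is_derive (fun t => f t * g t) x (a * g x + f x * b).
Proof. intros Hf Hg. exact (is_derive_mult f g x a b Hf Hg Rmult_comm). Qed.

Lemma is_derive_linear (k a x : R) : is_derive (fun t => k * t + a) x k.
Proof.
  eapply is_derive_eq;
    [apply (is_derive_plus_R (fun t => k * t) (fun _ => a));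
       [apply is_derive_scal_R, is_derive_id_R | apply is_derive_const_R] | reflexivity | ring].
Qed.

(* [rsum n f] sums the first [n] terms, unlike [sum_f_R0 f n] which sums [n + 1]. *)
Fixpoint rsum (n : nat) (f : nat -> R) : R :=
  match n with O => 0 | S m => rsum m f + f m end.

Lemma sum_f_R0_rsum f n : sum_f_R0 f n = rsum (S n) f.
Proof. induction n as [|n IH]; simpl in *; [lra | now rewrite IH]. Qed.

Lemma rsum_ext n f g : (forall k, (k < n)%nat -> f k = g k) -> rsum n f = rsum n g.
Proof. induction n as [|n IH]; simpl; intros H; auto. rewrite IH, H; auto. Qed.

Lemma rsum_plus n f g : rsum n (fun k => f k + g k) = rsum n f + rsum n g.
Proof. induction n as [|n IH]; simpl; [lra | rewrite IH; lra]. Qed.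

Lemma rsum_scal n a f : rsum n (fun k => a * f k) = a * rsum n f.
Proof. induction n as [|n IH]; simpl; [lra | rewrite IH; lra]. Qed.

Lemma rsum_opp n f : rsum n (fun k => - f k) = - rsum n f.
Proof. induction n as [|n IH]; simpl; [lra | rewrite IH; lra]. Qed.

Lemma rsum_0 n : rsum n (fun _ => 0) = 0.
Proof. induction n as [|n IH]; simpl; [lra | rewrite IH; lra]. Qed.

Lemma rsum_le n f g : (forall k, (k < n)%nat -> f k <= g k) -> rsum n f <= rsum n g.
Proof.
  induction n as [|n IH]; simpl; intros H; [lra |].
  assert (rsum n f <= rsum n g) by (apply IH; intros; apply H; lia).
  specialize (H n (Nat.lt_succ_diag_r n)). lra.
Qed.

Lemma rsum_nonneg n f : (forall k, (k < n)%nat -> 0 <= f k) -> 0 <= rsum n f.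
Proof. intros H. rewrite <- (rsum_0 n). now apply rsum_le. Qed.

Lemma Rabs_rsum_le n f : Rabs (rsum n f) <= rsum n (fun k => Rabs (f k)).
Proof.
  induction n as [|n IH]; simpl; [rewrite Rabs_R0; lra |].
  eapply Rle_trans; [apply Rabs_triang | lra].
Qed.

Lemma rsum_Sl n f : rsum (S n) f = f O + rsum n (fun k => f (S k)).
Proof. induction n as [|n IH]; simpl in *; [lra | rewrite IH; lra]. Qed.

Lemma rsum_rev n f : rsum n f = rsum n (fun k => f (n - 1 - k)%nat).
Proof.
  induction n as [|n IH]; [reflexivity |].
  rewrite (rsum_Sl n (fun k => f (S n - 1 - k)%nat)). simpl rsum at 1.
  rewrite IH, Rplus_comm. replace (S n - 1 - 0)%nat with n by lia. f_equal.
  apply rsum_ext. intros k Hk. f_equal. lia.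
Qed.

Lemma rsum_single n f i : (i < n)%nat ->
  (forall k, (k < n)%nat -> k <> i -> f k = 0) -> rsum n f = f i.
Proof.
  induction n as [|n IH]; intros Hi H; [lia |]. simpl.
  destruct (Nat.eq_dec i n) as [->|Hne].
  - rewrite (rsum_ext n f (fun _ => 0)), rsum_0; [lra |]. intros k Hk; apply H; lia.
  - rewrite IH, (H n); [lra | lia | lia | lia |]. intros; apply H; lia.
Qed.

Definition poly_fun (n : nat) (c : nat -> R) (t : R) : R := rsum n (fun k => c k * t ^ k).

(* [is_poly n f]: [f] is a polynomial with at most [n] coefficients, i.e. of degree less than [n]. *)
Definition is_poly (n : nat) (f : R -> R) : Prop := exists c, forall t, f t = poly_fun n c t.

Lemma poly_eval_poly_fun N c t : poly_eval N c t = poly_fun (S N) c t.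
Proof. apply sum_f_R0_rsum. Qed.

Lemma poly_deriv_poly_fun N c t :
  poly_deriv N c t = poly_fun N (fun k => INR (S k) * c (S k)) t.
Proof.
  unfold poly_deriv, poly_fun. rewrite sum_f_R0_rsum, rsum_Sl. simpl INR.
  rewrite !Rmult_0_l, Rplus_0_l. apply rsum_ext. intros k _. reflexivity.
Qed.

Lemma is_derive_poly_fun (n : nat) (c : nat -> R) (t : R) :
  is_derive (poly_fun (S n) c) t (poly_fun n (fun k => INR (S k) * c (S k)) t).
Proof.
  induction n as [|n IH].
  - eapply is_derive_eq; [apply (is_derive_const_R (c O)) | intros; unfold poly_fun; simpl; ring | ].
    reflexivity.
  - eapply is_derive_eq;
      [apply is_derive_plus_R; [exact IH | apply is_derive_scal_R, is_derive_pow, is_derive_id_R] | reflexivity |].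
    unfold poly_fun. change (rsum (S n) ?F) with (rsum n F + F n). simpl pred. cbv beta. ring.
Qed.

Lemma is_derive_poly_eval (N : nat) (c : nat -> R) (t : R) : is_derive (poly_eval N c) t (poly_deriv N c t).
Proof.
  rewrite poly_deriv_poly_fun.
  eapply is_derive_eq; [apply is_derive_poly_fun | intros; now rewrite poly_eval_poly_fun | reflexivity].
Qed.

Lemma is_poly_ext n f g : (forall t, f t = g t) -> is_poly n f -> is_poly n g.
Proof. intros H [c Hc]. exists c. intros t. rewrite <- H. auto. Qed.

Lemma is_poly_0 n : is_poly n (fun _ => 0).
Proof.
  exists (fun _ => 0). intros t. unfold poly_fun.
  rewrite (rsum_ext n _ (fun _ => 0)), rsum_0; [reflexivity |]. intros; ring.
Qed.

Lemma is_poly_const a : is_poly 1 (fun _ => a).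
Proof. exists (fun _ => a). intros t. unfold poly_fun. simpl. ring. Qed.

Lemma is_poly_plus n f g : is_poly n f -> is_poly n g -> is_poly n (fun t => f t + g t).
Proof.
  intros [c Hc] [d Hd]. exists (fun k => c k + d k). intros t. rewrite Hc, Hd.
  unfold poly_fun. rewrite <- rsum_plus. apply rsum_ext; intros; ring.
Qed.

Lemma is_poly_scal n a f : is_poly n f -> is_poly n (fun t => a * f t).
Proof.
  intros [c Hc]. exists (fun k => a * c k). intros t. rewrite Hc.
  unfold poly_fun. rewrite <- rsum_scal. apply rsum_ext; intros; ring.
Qed.

Lemma is_poly_minus n f g : is_poly n f -> is_poly n g -> is_poly n (fun t => f t - g t).
Proof.
  intros Hf Hg. apply (is_poly_ext n (fun t => f t + -1 * g t)); [intros; ring |].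
  apply is_poly_plus, is_poly_scal; assumption.
Qed.

Lemma is_poly_S n f : is_poly n f -> is_poly (S n) f.
Proof.
  intros [c Hc]. exists (fun k => if Nat.eqb k n then 0 else c k). intros t. rewrite Hc.
  unfold poly_fun. simpl. rewrite Nat.eqb_refl, Rmult_0_l, Rplus_0_r.
  apply rsum_ext. intros k Hk. destruct (Nat.eqb_spec k n); [lia | reflexivity].
Qed.

Lemma is_poly_le n m f : (n <= m)%nat -> is_poly n f -> is_poly m f.
Proof. induction 1; auto using is_poly_S. Qed.

Lemma is_poly_mul_id n f : is_poly n f -> is_poly (S n) (fun t => t * f t).
Proof.
  intros [c Hc]. exists (fun k => match k with O => 0 | S j => c j end). intros t.
  rewrite Hc. unfold poly_fun. rewrite rsum_Sl, <- rsum_scal. simpl. rewrite Rmult_0_l, Rplus_0_l.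
  apply rsum_ext; intros; simpl; ring.
Qed.

Lemma is_poly_mul_affine n f a b : is_poly n f -> is_poly (S n) (fun t => (a * t + b) * f t).
Proof.
  intros Hf. apply (is_poly_ext _ (fun t => a * (t * f t) + b * f t)); [intros; ring |].
  apply is_poly_plus; [apply is_poly_scal, is_poly_mul_id | apply is_poly_S, is_poly_scal]; assumption.
Qed.

Lemma is_poly_rsum n m (F : nat -> R -> R) :
  (forall k, (k < m)%nat -> is_poly n (F k)) -> is_poly n (fun t => rsum m (fun k => F k t)).
Proof.
  induction m as [|m IH]; intros H; [apply is_poly_0 |].
  apply is_poly_plus; [apply IH; auto | apply H; lia].
Qed.

Lemma is_poly_comp_opp n f : is_poly n f -> is_poly n (fun t => f (- t)).
Proof.
  intros [c Hc]. exists (fun k => c k * (-1) ^ k). intros t. rewrite Hc. unfold poly_fun.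
  apply rsum_ext. intros k _. replace (- t) with (-1 * t) by ring. rewrite Rpow_mult_distr. ring.
Qed.

Lemma is_poly_poly_eval N c : is_poly (S N) (poly_eval N c).
Proof. exists c. apply poly_eval_poly_fun. Qed.

Lemma is_poly_poly_deriv N c : is_poly N (poly_deriv N c).
Proof. eexists. apply poly_deriv_poly_fun. Qed.

Lemma pow_sub_factor m a : exists h, is_poly m h /\ forall t, t ^ m - a ^ m = (t - a) * h t.
Proof.
  induction m as [|m [h [Hh E]]].
  - exists (fun _ => 0). split; [apply is_poly_0 | intros; simpl; ring].
  - exists (fun t => t * h t + a ^ m). split.
    + apply is_poly_plus; [now apply is_poly_mul_id | apply (is_poly_le 1); [lia | apply is_poly_const]].
    + intros t. simpl. replace (t * t ^ m - a * a ^ m) with (t * (t ^ m - a ^ m) + a ^ m * (t - a)) by ring.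
      rewrite E. ring.
Qed.

Lemma is_poly_factor m f a :
  is_poly (S m) f -> exists g, is_poly m g /\ forall t, f t = (t - a) * g t + f a.
Proof.
  intros [c Hc]. revert f Hc. induction m as [|m IH]; intros f Hc.
  - exists (fun _ => 0). split; [apply is_poly_0 |]. intros t. rewrite !Hc. unfold poly_fun; simpl; ring.
  - destruct (IH (poly_fun (S m) c) (fun t => eq_refl)) as [g1 [Hg1 E1]].
    destruct (pow_sub_factor (S m) a) as [h [Hh Eh]].
    exists (fun t => g1 t + c (S m) * h t). split.
    + apply is_poly_plus; [now apply is_poly_S | now apply is_poly_scal].
    + intros t. rewrite !Hc.
      change (poly_fun (S m) c t + c (S m) * t ^ S m
              = (t - a) * (g1 t + c (S m) * h t) + (poly_fun (S m) c a + c (S m) * a ^ S m)).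
      rewrite (E1 t).
      replace (c (S m) * t ^ S m) with (c (S m) * a ^ S m + c (S m) * (t ^ S m - a ^ S m)) by ring.
      rewrite Eh. ring.
Qed.

Lemma is_poly_roots_0 n f r : is_poly n f ->
  (forall i j, (i < n)%nat -> (j < n)%nat -> r i = r j -> i = j) ->
  (forall i, (i < n)%nat -> f (r i) = 0) -> forall t, f t = 0.
Proof.
  revert f. induction n as [|n IH]; intros f Hf Hr Hz t.
  - destruct Hf as [c Hc]. apply Hc.
  - destruct (is_poly_factor n f (r n) Hf) as [g [Hg E]].
    assert (G : forall s, g s = 0).
    { apply IH; [exact Hg | intros i j Hi Hj; apply Hr; lia |].
      intros i Hi. assert (Fi : f (r i) = 0) by (apply Hz; lia).
      rewrite E, (Hz n), Rplus_0_r in Fi by lia.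
      apply Rmult_integral in Fi as [Fi | Fi]; [| exact Fi].
      assert (i = n) by (apply Hr; lia || lra). lia. }
    rewrite E, G, (Hz n) by lia. ring.
Qed.

Lemma is_poly_eq_nodes n f g r : is_poly n f -> is_poly n g ->
  (forall i j, (i < n)%nat -> (j < n)%nat -> r i = r j -> i = j) ->
  (forall i, (i < n)%nat -> f (r i) = g (r i)) -> forall t, f t = g t.
Proof.
  intros Hf Hg Hr Hfg t.
  enough (f t - g t = 0) by lra.
  apply (is_poly_roots_0 n (fun s => f s - g s) r); [now apply is_poly_minus | exact Hr |].
  intros i Hi. rewrite Hfg by exact Hi. ring.
Qed.

Lemma is_poly_derive n f : is_poly (S n) f ->
  exists df, is_poly n df /\ forall t, is_derive f t (df t).
Proof.
  intros [c Hc]. exists (poly_fun n (fun k => INR (S k) * c (S k))). split; [eexists; reflexivity |].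
  intros t. eapply is_derive_eq; [apply is_derive_poly_fun | intros; now rewrite Hc | reflexivity].
Qed.

Lemma is_poly_derive_unique n f df : is_poly (S n) f ->
  (forall t, is_derive f t (df t)) -> is_poly n df.
Proof.
  intros Hf Hdf. destruct (is_poly_derive n f Hf) as [df' [Hdf' Hd']].
  apply (is_poly_ext n df'); [| exact Hdf'].
  intros t. exact (is_derive_unique_R _ _ _ _ (Hd' t) (Hdf t)).
Qed.

Lemma is_poly_continuous n f : is_poly n f -> forall t, continuity_pt f t.
Proof.
  intros Hf t. destruct (is_poly_derive n f (is_poly_S n f Hf)) as [df [_ Hd]].
  apply continuity_pt_filterlim, (ex_derive_continuous f t). eexists; apply Hd.
Qed.

(* Here the degree is at most [n], whereas [is_poly n] means degree less than [n]. *)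
Inductive is_trig_poly (n : nat) : (R -> R) -> Prop :=
| trig_cos j : (j <= n)%nat -> is_trig_poly n (fun x => cos (INR j * x))
| trig_sin j : (j <= n)%nat -> is_trig_poly n (fun x => sin (INR j * x))
| trig_plus f g : is_trig_poly n f -> is_trig_poly n g -> is_trig_poly n (fun x => f x + g x)
| trig_scal a f : is_trig_poly n f -> is_trig_poly n (fun x => a * f x)
| trig_ext f g : (forall x, f x = g x) -> is_trig_poly n f -> is_trig_poly n g.

Lemma is_trig_poly_le n m f : (n <= m)%nat -> is_trig_poly n f -> is_trig_poly m f.
Proof.
  intros Hle H. induction H.
  - apply trig_cos; lia.
  - apply trig_sin; lia.
  - now apply trig_plus.
  - now apply trig_scal.
  - eapply trig_ext; eauto.
Qed.

Lemma is_trig_poly_0 n : is_trig_poly n (fun _ => 0).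
Proof.
  apply (trig_ext n (fun x => 0 * cos (INR 0 * x))); [intros; ring |].
  apply trig_scal, trig_cos. lia.
Qed.

Lemma is_trig_poly_1 n : is_trig_poly n (fun _ => 1).
Proof.
  apply (trig_ext n (fun x => cos (INR 0 * x))); [intros; simpl; now rewrite Rmult_0_l, cos_0 |].
  apply trig_cos. lia.
Qed.

Lemma is_trig_poly_rsum n m (F : nat -> R -> R) :
  (forall k, (k < m)%nat -> is_trig_poly n (F k)) ->
  is_trig_poly n (fun x => rsum m (fun k => F k x)).
Proof.
  induction m as [|m IH]; intros H; [apply is_trig_poly_0 |].
  apply trig_plus; [apply IH; auto | apply H; lia].
Qed.

Lemma is_trig_poly_shift n a f : is_trig_poly n f -> is_trig_poly n (fun x => f (a + x)).
Proof.
  intros H. induction H.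
  - apply (trig_ext n (fun x => cos (INR j * a) * cos (INR j * x) + - sin (INR j * a) * sin (INR j * x))).
    { intros x. rewrite Rmult_plus_distr_l, cos_plus. ring. }
    apply trig_plus; apply trig_scal; [apply trig_cos | apply trig_sin]; assumption.
  - apply (trig_ext n (fun x => sin (INR j * a) * cos (INR j * x) + cos (INR j * a) * sin (INR j * x))).
    { intros x. rewrite Rmult_plus_distr_l, sin_plus. ring. }
    apply trig_plus; apply trig_scal; [apply trig_cos | apply trig_sin]; assumption.
  - now apply trig_plus.
  - now apply trig_scal.
  - eapply trig_ext; [| eassumption]. intros x; simpl; auto.
Qed.

Lemma is_trig_poly_mul_cos n f : is_trig_poly n f -> is_trig_poly (S n) (fun x => cos x * f x).
Proof.
  intros H. induction H as [[|j] Hj|[|j] Hj|f g _ IHf _ IHg|a f _ IHf|f g Hfg _ IHf].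
  - apply (trig_ext _ (fun x => cos (INR 1 * x))); [intros x; simpl; rewrite Rmult_0_l, Rmult_1_l, cos_0; ring |].
    apply trig_cos. lia.
  - apply (trig_ext _ (fun x => / 2 * cos (INR (S (S j)) * x) + / 2 * cos (INR j * x))).
    + intros x. rewrite !S_INR.
      replace ((INR j + 1 + 1) * x) with ((INR j + 1) * x + x) by ring.
      replace (INR j * x) with ((INR j + 1) * x - x) by ring.
      rewrite cos_plus, cos_minus. field.
    + apply trig_plus; apply trig_scal, trig_cos; lia.
  - apply (trig_ext _ (fun x => 0 * cos (INR 0 * x))); [intros x; simpl; rewrite !Rmult_0_l, sin_0; ring |].
    apply trig_scal, trig_cos. lia.
  - apply (trig_ext _ (fun x => / 2 * sin (INR (S (S j)) * x) + / 2 * sin (INR j * x))).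
    + intros x. rewrite !S_INR.
      replace ((INR j + 1 + 1) * x) with ((INR j + 1) * x + x) by ring.
      replace (INR j * x) with ((INR j + 1) * x - x) by ring.
      rewrite sin_plus, sin_minus. field.
    + apply trig_plus; apply trig_scal, trig_sin; lia.
  - eapply trig_ext; [| apply (trig_plus _ _ _ IHf IHg)]. intros; simpl; ring.
  - eapply trig_ext; [| apply (trig_scal _ a _ IHf)]. intros; simpl; ring.
  - eapply trig_ext; [| exact IHf]. intros; simpl. now rewrite Hfg.
Qed.

Lemma is_trig_poly_cos_pow k : is_trig_poly k (fun x => cos x ^ k).
Proof.
  induction k as [|k IH]; [apply is_trig_poly_1 |].
  eapply trig_ext; [| apply is_trig_poly_mul_cos, IH]. intros; simpl; reflexivity.
Qed.

Lemma is_trig_poly_comp_cos n p : is_poly (S n) p -> is_trig_poly n (fun x => p (cos x)).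
Proof.
  intros [c Hc]. apply (trig_ext _ (fun x => poly_fun (S n) c (cos x))); [intros x; now rewrite Hc |].
  apply (is_trig_poly_rsum n (S n) (fun k x => c k * cos x ^ k)). intros k Hk.
  apply trig_scal, (is_trig_poly_le k); [lia | apply is_trig_poly_cos_pow].
Qed.

Lemma cos_INR_PI k : cos (INR k * PI) = (-1) ^ k.
Proof.
  induction k as [|k IH]; [simpl; now rewrite Rmult_0_l, cos_0 |].
  rewrite S_INR, Rmult_plus_distr_r, Rmult_1_l, neg_cos, IH. simpl. ring.
Qed.

Lemma sin_INR_PI k : sin (INR k * PI) = 0.
Proof.
  induction k as [|k IH]; [simpl; now rewrite Rmult_0_l, sin_0 |].
  rewrite S_INR, Rmult_plus_distr_r, Rmult_1_l, neg_sin, IH. ring.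
Qed.

Lemma pow_m1_sqr k : (-1) ^ k * (-1) ^ k = 1.
Proof. rewrite <- pow_add. replace (k + k)%nat with (2 * k)%nat by lia. apply pow_1_even. Qed.

Lemma rsum_alternating_telescope (u : nat -> R) m :
  rsum m (fun k => (-1) ^ k * (u (S k) + u k)) = u O - (-1) ^ m * u m.
Proof. induction m as [|m IH]; simpl; [ring | rewrite IH; ring]. Qed.

(* Riesz's interpolation formula: for a trigonometric polynomial [f] of degree
   at most [n], [f'(0)] is a fixed linear combination of the values of [f] at the
   [2n] points [(2k+1)π/(2n)], with weights of alternating sign. *)
Section Riesz.

Variable n : nat.
Hypothesis n_ge1 : (1 <= n)%nat.

Lemma INR_n_pos : 0 < INR n.
Proof. apply lt_0_INR. lia. Qed.

Definition riesz_node (k : nat) : R := (2 * INR k + 1) * PI / (2 * INR n).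
Definition riesz_weight (k : nat) : R := (-1) ^ k / sin (riesz_node k / 2) ^ 2.
Definition riesz_sum (f : R -> R) : R := rsum (2 * n) (fun k => riesz_weight k * f (riesz_node k)).
Definition riesz_sin (j : nat) : R := riesz_sum (fun x => sin (INR j * x)).
Definition riesz_abs_sum : R := rsum (2 * n) (fun k => / sin (riesz_node k / 2) ^ 2).

Lemma sin_half_riesz_node_pos k : (k < 2 * n)%nat -> 0 < sin (riesz_node k / 2).
Proof.
  intros Hk. pose proof INR_n_pos. pose proof PI_RGT_0. pose proof (pos_INR k).
  assert (INR k + 1 <= 2 * INR n).
  { rewrite <- S_INR. replace 2 with (INR 2) by reflexivity. rewrite <- mult_INR. apply le_INR. lia. }
  unfold riesz_node. apply sin_gt_0.
  - apply Rmult_lt_0_compat; [| lra]. apply Rdiv_lt_0_compat; nra.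
  - apply Rmult_lt_reg_r with (4 * INR n); [lra |]. field_simplify; [nra | lra].
Qed.

Lemma sin_n_riesz_node k : sin (INR n * riesz_node k) = (-1) ^ k.
Proof.
  unfold riesz_node. pose proof INR_n_pos.
  replace (INR n * ((2 * INR k + 1) * PI / (2 * INR n))) with (PI / 2 + INR k * PI) by (field; lra).
  rewrite <- cos_sin. apply cos_INR_PI.
Qed.

Lemma riesz_node_rev k : (k < 2 * n)%nat -> riesz_node (2 * n - 1 - k) = 2 * PI - riesz_node k.
Proof.
  intros Hk. pose proof INR_n_pos. unfold riesz_node.
  rewrite !minus_INR, mult_INR by lia. simpl INR. field. lra.
Qed.

Lemma riesz_weight_rev k : (k < 2 * n)%nat -> riesz_weight (2 * n - 1 - k) = - riesz_weight k.
Proof.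
  intros Hk. unfold riesz_weight. rewrite riesz_node_rev by exact Hk.
  replace ((2 * PI - riesz_node k) / 2) with (PI - riesz_node k / 2) by field. rewrite sin_PI_x.
  assert (Hsign : (-1) ^ (2 * n - 1 - k) * (-1) ^ k = -1).
  { rewrite <- pow_add. replace (2 * n - 1 - k + k)%nat with (S (2 * (n - 1))) by lia. apply pow_1_odd. }
  pose proof (pow_m1_sqr k).
  assert (E : (-1) ^ (2 * n - 1 - k) = - (-1) ^ k) by nra.
  rewrite E. unfold Rdiv. ring.
Qed.

(* The nodes and weights are symmetric about π, and the weights are odd there. *)
Lemma riesz_sum_cos j : riesz_sum (fun x => cos (INR j * x)) = 0.
Proof.
  unfold riesz_sum. set (F := fun k => riesz_weight k * cos (INR j * riesz_node k)).
  enough (rsum (2 * n) F = - rsum (2 * n) F) by lra.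
  rewrite rsum_rev at 1. rewrite <- rsum_opp. apply rsum_ext. intros k Hk. unfold F.
  rewrite riesz_weight_rev, riesz_node_rev by exact Hk.
  replace (INR j * (2 * PI - riesz_node k)) with (- (INR j * riesz_node k) + 2 * INR j * PI) by ring.
  rewrite cos_period, cos_neg. ring.
Qed.

Lemma riesz_sum_plus f g : riesz_sum (fun x => f x + g x) = riesz_sum f + riesz_sum g.
Proof. unfold riesz_sum. rewrite <- rsum_plus. apply rsum_ext; intros; ring. Qed.

Lemma riesz_sum_scal a f : riesz_sum (fun x => a * f x) = a * riesz_sum f.
Proof. unfold riesz_sum. rewrite <- rsum_scal. apply rsum_ext; intros; ring. Qed.

Lemma riesz_sin_n : riesz_sin n = riesz_abs_sum.
Proof.
  unfold riesz_sin, riesz_sum, riesz_abs_sum. apply rsum_ext. intros k _.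
  unfold riesz_weight. rewrite sin_n_riesz_node.
  replace ((-1) ^ k / sin (riesz_node k / 2) ^ 2 * (-1) ^ k)
    with ((-1) ^ k * (-1) ^ k / sin (riesz_node k / 2) ^ 2) by (unfold Rdiv; ring).
  rewrite pow_m1_sqr. unfold Rdiv. ring.
Qed.

Lemma riesz_abs_sum_pos : 0 < riesz_abs_sum.
Proof.
  assert (Hpos : forall k, (k < 2 * n)%nat -> 0 < / sin (riesz_node k / 2) ^ 2).
  { intros k Hk. pose proof (sin_half_riesz_node_pos k Hk). apply Rinv_0_lt_compat. nra. }
  unfold riesz_abs_sum. replace (2 * n)%nat with (S (2 * n - 1)) by lia.
  change (rsum (S ?m) ?F) with (rsum m F + F m).
  assert (0 <= rsum (2 * n - 1) (fun k => / sin (riesz_node k / 2) ^ 2)).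
  { apply rsum_nonneg. intros k Hk. left. apply Hpos. lia. }
  specialize (Hpos (2 * n - 1)%nat ltac:(lia)). lra.
Qed.

(* Multiplying by 2 cos(jπ/(2n)) turns the sum into a telescoping one. *)
Lemma alternating_sin_sum_0 j : (j < n)%nat ->
  rsum (2 * n) (fun k => (-1) ^ k * sin (INR j * riesz_node k)) = 0.
Proof.
  intros Hj. pose proof INR_n_pos. pose proof PI_RGT_0. pose proof (pos_INR j).
  assert (INR j < INR n) by (apply lt_INR; exact Hj).
  set (b := INR j * PI / (2 * INR n)).
  assert (Hb : 0 < cos b).
  { apply cos_gt_0; unfold b.
    - assert (0 <= INR j * PI / (2 * INR n)) by (apply Rcomplements.Rdiv_le_0_compat; nra). lra.
    - apply Rmult_lt_reg_r with (2 * INR n); [lra |]. field_simplify; nra. }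
  set (u := fun k => sin (INR j * INR k * PI / INR n)).
  assert (E : 2 * cos b * rsum (2 * n) (fun k => (-1) ^ k * sin (INR j * riesz_node k))
              = rsum (2 * n) (fun k => (-1) ^ k * (u (S k) + u k))).
  { rewrite <- rsum_scal. apply rsum_ext. intros k Hk. unfold u. rewrite S_INR.
    replace (INR j * (INR k + 1) * PI / INR n) with (INR j * riesz_node k + b)
      by (unfold riesz_node, b; field; lra).
    replace (INR j * INR k * PI / INR n) with (INR j * riesz_node k - b)
      by (unfold riesz_node, b; field; lra).
    rewrite sin_plus, sin_minus. ring. }
  rewrite rsum_alternating_telescope in E. unfold u in E.
  replace (INR j * INR 0 * PI / INR n) with (INR 0 * PI) in E by (simpl; field; lra).
  replace (INR j * INR (2 * n) * PI / INR n) with (INR (2 * j) * PI) in E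
    by (rewrite !mult_INR; simpl; field; lra).
  rewrite !sin_INR_PI in E.
  assert (cos b * rsum (2 * n) (fun k => (-1) ^ k * sin (INR j * riesz_node k)) = 0) as E' by lra.
  apply Rmult_integral in E' as [E' | E']; lra.
Qed.

Lemma riesz_sin_rec j : (S j < n)%nat -> riesz_sin (S (S j)) = 2 * riesz_sin (S j) - riesz_sin j.
Proof.
  intros Hj. pose proof (alternating_sin_sum_0 (S j) Hj) as Z.
  enough (riesz_sin (S (S j)) + riesz_sin j + -2 * riesz_sin (S j)
          = -4 * rsum (2 * n) (fun k => (-1) ^ k * sin (INR (S j) * riesz_node k))) by lra.
  unfold riesz_sin. rewrite <- !riesz_sum_scal, <- !riesz_sum_plus.
  unfold riesz_sum. rewrite <- rsum_scal. apply rsum_ext. intros k Hk.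
  pose proof (sin_half_riesz_node_pos k Hk). unfold riesz_weight.
  assert (C : cos (riesz_node k) = 1 - 2 * sin (riesz_node k / 2) ^ 2).
  { replace (riesz_node k) with (2 * (riesz_node k / 2)) at 1 by field. rewrite cos_2a_sin. ring. }
  rewrite !S_INR.
  replace ((INR j + 1 + 1) * riesz_node k) with ((INR j + 1) * riesz_node k + riesz_node k) by ring.
  replace (INR j * riesz_node k) with ((INR j + 1) * riesz_node k - riesz_node k) by ring.
  rewrite sin_plus, sin_minus, C. field. lra.
Qed.

Lemma riesz_sin_linear j : (j <= n)%nat -> riesz_sin j = INR j * riesz_sin 1.
Proof.
  intros Hj.
  enough (H : forall i, (S i <= n)%nat ->
            riesz_sin i = INR i * riesz_sin 1 /\ riesz_sin (S i) = INR (S i) * riesz_sin 1).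
  { destruct j as [|j]; [apply H; lia | apply H; exact Hj]. }
  clear j Hj. intros j. induction j as [|j IH]; intros Hj.
  - split; [| simpl; ring]. unfold riesz_sin, riesz_sum. simpl INR.
    rewrite (rsum_ext _ _ (fun _ => 0)), rsum_0; [ring |]. intros. rewrite Rmult_0_l, sin_0. ring.
  - destruct (IH ltac:(lia)) as [H0 H1]. split; [exact H1 |].
    rewrite riesz_sin_rec, H1, H0 by lia. rewrite !S_INR. ring.
Qed.

Lemma riesz_sin_1_pos : 0 < riesz_sin 1.
Proof.
  pose proof riesz_abs_sum_pos as H. rewrite <- riesz_sin_n, riesz_sin_linear in H by lia.
  pose proof INR_n_pos. nra.
Qed.

(* Both sides are linear in [f]; for [cos (j x)] both vanish, and for [sin (j x)]
   the identity is [riesz_sin_linear], so the Riesz constant never needs computing. *)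
Lemma is_derive_trig_poly_0 f : is_trig_poly n f -> is_derive f 0 (riesz_sum f / riesz_sin 1).
Proof.
  pose proof riesz_sin_1_pos. intros Hf.
  induction Hf as [j Hj|j Hj|f g _ IHf _ IHg|a f _ IHf|f g Hfg _ IHf].
  - rewrite riesz_sum_cos. eapply is_derive_eq;
      [apply (is_derive_comp_R cos (fun x => INR j * x + 0)); [apply is_derive_cos | apply (is_derive_linear (INR j) 0)]
      | intros; cbv beta; now rewrite Rplus_0_r |].
    rewrite Rmult_0_r, Rplus_0_r, sin_0. field. lra.
  - fold (riesz_sin j). rewrite riesz_sin_linear by exact Hj. eapply is_derive_eq;
      [apply (is_derive_comp_R sin (fun x => INR j * x + 0)); [apply is_derive_sin | apply (is_derive_linear (INR j) 0)]
      | intros; cbv beta; now rewrite Rplus_0_r |].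
    rewrite Rmult_0_r, Rplus_0_r, cos_0. field. lra.
  - rewrite riesz_sum_plus. eapply is_derive_eq; [exact (is_derive_plus_R _ _ _ _ _ IHf IHg) | reflexivity |].
    field. lra.
  - rewrite riesz_sum_scal. eapply is_derive_eq; [exact (is_derive_scal_R _ a _ _ IHf) | reflexivity |].
    field. lra.
  - replace (riesz_sum g) with (riesz_sum f); [eapply is_derive_eq; [exact IHf | exact Hfg | reflexivity] |].
    unfold riesz_sum. apply rsum_ext. intros. now rewrite Hfg.
Qed.

Lemma bernstein_trig f M a l : is_trig_poly n f -> (forall x, Rabs (f x) <= M) ->
  is_derive f a l -> Rabs l <= INR n * M.
Proof.
  intros Hf HM Hd. pose proof riesz_sin_1_pos.
  set (g := fun x => f (a + x)).
  assert (Hg : is_derive g 0 l).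
  { eapply is_derive_eq;
      [apply (is_derive_comp_R f (fun x => 1 * x + a)); [rewrite Rmult_0_r, Rplus_0_l; exact Hd | apply is_derive_linear]
      | intros; unfold g; f_equal; ring | ring]. }
  pose proof (is_derive_trig_poly_0 g (is_trig_poly_shift n a f Hf)) as Hr.
  rewrite (is_derive_unique_R _ _ _ _ Hg Hr).
  assert (Habs : Rabs (riesz_sum g) <= riesz_abs_sum * M).
  { unfold riesz_sum, riesz_abs_sum. eapply Rle_trans; [apply Rabs_rsum_le |].
    rewrite Rmult_comm, <- rsum_scal. apply rsum_le. intros k Hk.
    pose proof (sin_half_riesz_node_pos k Hk). unfold riesz_weight, Rdiv.
    rewrite !Rabs_mult, pow_1_abs, Rabs_inv, (Rabs_pos_eq (_ ^ 2)) by nra.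
    assert (0 < / sin (riesz_node k / 2) ^ 2) by (apply Rinv_0_lt_compat; nra).
    specialize (HM (a + riesz_node k)). unfold g. nra. }
  rewrite <- riesz_sin_n, riesz_sin_linear in Habs by lia.
  unfold Rdiv. rewrite Rabs_mult, Rabs_inv, (Rabs_pos_eq (riesz_sin 1)) by lra.
  apply Rmult_le_reg_r with (riesz_sin 1); [exact H |]. field_simplify; [nra | lra].
Qed.

End Riesz.

Lemma bernstein n p dp M : (1 <= n)%nat -> is_poly (S n) p -> (forall y, is_derive p y (dp y)) ->
  (forall y, -1 <= y <= 1 -> Rabs (p y) <= M) ->
  forall th, Rabs (sin th * dp (cos th)) <= INR n * M.
Proof.
  intros Hn Hp Hd HM th.
  replace (sin th * dp (cos th)) with (- (- sin th * dp (cos th))) by ring. rewrite Rabs_Ropp.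
  apply (bernstein_trig n Hn (fun x => p (cos x)) M th).
  - now apply is_trig_poly_comp_cos.
  - intros x. apply HM, COS_bound.
  - eapply is_derive_eq; [apply (is_derive_comp_R p cos); [apply Hd | apply is_derive_cos] | reflexivity | ring].
Qed.

Fixpoint chebyshev (n : nat) (t : R) : R :=
  match n with
  | O => 1
  | S O => t
  | S ((S k) as m) => 2 * t * chebyshev m t - chebyshev k t
  end.

Lemma chebyshev_cos n x : chebyshev n (cos x) = cos (INR n * x).
Proof.
  enough (H : forall n, chebyshev n (cos x) = cos (INR n * x)
                        /\ chebyshev (S n) (cos x) = cos (INR (S n) * x)) by apply H.
  clear n. intros n. induction n as [|n [IH1 IH2]].
  - simpl. now rewrite Rmult_0_l, Rmult_1_l, cos_0.
  - split; [exact IH2 |].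
    change (chebyshev (S (S n)) (cos x)) with (2 * cos x * chebyshev (S n) (cos x) - chebyshev n (cos x)).
    rewrite IH1, IH2, !S_INR.
    replace ((INR n + 1 + 1) * x) with ((INR n + 1) * x + x) by ring.
    replace (INR n * x) with ((INR n + 1) * x - x) by ring.
    rewrite cos_plus, cos_minus. ring.
Qed.

Lemma is_poly_chebyshev n : is_poly (S n) (chebyshev n).
Proof.
  enough (H : forall n, is_poly (S n) (chebyshev n) /\ is_poly (S (S n)) (chebyshev (S n))) by apply H.
  clear n. intros n. induction n as [|n [IH1 IH2]].
  - split; [apply is_poly_const |].
    apply (is_poly_ext _ (fun t => t * 1)); [intros; simpl; ring |]. apply is_poly_mul_id, is_poly_const.
  - split; [exact IH2 |].
    apply (is_poly_ext _ (fun t => (2 * t + 0) * chebyshev (S n) t - chebyshev n t)); [intros; simpl; ring |].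
    apply is_poly_minus; [now apply is_poly_mul_affine | apply (is_poly_le (S n)); [lia | exact IH1]].
Qed.

Definition chebyshev_deriv (n : nat) (t : R) : R := Derive (chebyshev n) t.

Lemma is_derive_chebyshev n t : is_derive (chebyshev n) t (chebyshev_deriv n t).
Proof.
  destruct (is_poly_derive n _ (is_poly_chebyshev n)) as [df [_ Hdf]].
  unfold chebyshev_deriv. now rewrite (is_derive_unique _ _ _ (Hdf t)).
Qed.

Lemma is_poly_chebyshev_deriv n : is_poly n (chebyshev_deriv n).
Proof. apply (is_poly_derive_unique n (chebyshev n)); [apply is_poly_chebyshev | apply is_derive_chebyshev]. Qed.

Lemma chebyshev_deriv_cos n x : chebyshev_deriv n (cos x) * sin x = INR n * sin (INR n * x).
Proof.
  assert (H1 : is_derive (fun y => chebyshev n (cos y)) x (- sin x * chebyshev_deriv n (cos x))).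
  { apply is_derive_comp_R; [apply is_derive_chebyshev | apply is_derive_cos]. }
  assert (H2 : is_derive (fun y => chebyshev n (cos y)) x (INR n * - sin (INR n * x + 0))).
  { eapply is_derive_eq;
      [apply (is_derive_comp_R cos (fun y => INR n * y + 0)); [apply is_derive_cos | apply is_derive_linear]
      | intros; cbv beta; now rewrite chebyshev_cos, Rplus_0_r | reflexivity]. }
  pose proof (is_derive_unique_R _ _ _ _ H1 H2). rewrite Rplus_0_r in H. lra.
Qed.

Lemma Rabs_sin_mul_le n x : Rabs (sin (INR n * x)) <= INR n * Rabs (sin x).
Proof.
  induction n as [|n IH]; [simpl; rewrite Rmult_0_l, sin_0, Rabs_R0; lra |].
  rewrite S_INR, Rmult_plus_distr_r, Rmult_1_l, sin_plus.
  eapply Rle_trans; [apply Rabs_triang |]. rewrite !Rabs_mult.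
  assert (Rabs (cos x) <= 1) by (apply Rabs_le, COS_bound).
  assert (Rabs (cos (INR n * x)) <= 1) by (apply Rabs_le, COS_bound).
  pose proof (Rabs_pos (sin (INR n * x))). pose proof (Rabs_pos (sin x)). nra.
Qed.

Lemma cos_lt_cos_inv a b : 0 <= a <= PI -> 0 <= b <= PI -> cos a < cos b -> b < a.
Proof.
  intros Ha Hb H. destruct (Rlt_le_dec b a) as [| Hle]; [assumption | exfalso].
  destruct (Rle_lt_or_eq_dec _ _ Hle) as [Hlt | ->]; [| lra].
  pose proof (cos_decreasing_1 a b ltac:(lra) ltac:(lra) ltac:(lra) ltac:(lra) Hlt). lra.
Qed.

Lemma cos_le_cos_inv a b : 0 <= a <= PI -> 0 <= b <= PI -> cos a <= cos b -> b <= a.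
Proof.
  intros Ha Hb H. destruct (Rle_lt_dec b a) as [| Hlt]; [assumption | exfalso].
  pose proof (cos_decreasing_1 a b ltac:(lra) ltac:(lra) ltac:(lra) ltac:(lra) Hlt). lra.
Qed.

Lemma chebyshev_deriv_le n x : -1 < x < 1 -> chebyshev_deriv n x <= INR n ^ 2.
Proof.
  intros Hx. pose proof PI_RGT_0. pose proof (acos_bound x) as Hb. set (a := acos x) in Hb.
  assert (Hcos : cos a = x) by (apply cos_acos; lra).
  assert (Ha : 0 < a < PI).
  { split; [apply (cos_lt_cos_inv a 0) | apply (cos_lt_cos_inv PI a)]; rewrite ?cos_0, ?cos_PI; lra. }
  pose proof (sin_gt_0 a (proj1 Ha) (proj2 Ha)).
  pose proof (chebyshev_deriv_cos n a) as E. rewrite Hcos in E.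
  pose proof (Rabs_sin_mul_le n a) as B. rewrite (Rabs_pos_eq (sin a)) in B by lra.
  pose proof (Rle_abs (sin (INR n * a))). pose proof (pos_INR n).
  apply Rmult_le_reg_r with (sin a); [assumption |]. rewrite E. nra.
Qed.

Definition bounded_on_I (f : R -> R) : Prop := exists K, forall t, -1 <= t <= 1 -> Rabs (f t) <= K.

Definition continuous_on_I (f : R -> R) : Prop := forall t, -1 <= t <= 1 -> continuous_on_I_at f t.

Lemma lub_of_is_lub E : bound E -> (exists x, E x) -> is_lub E (lub_of E).
Proof.
  intros Hb He. unfold lub_of. apply epsilon_spec.
  destruct (completeness E Hb He) as [m Hm]. exists m; exact Hm.
Qed.

Lemma sup_norm_is_lub f : bounded_on_I f ->
  is_lub (fun y => exists t, -1 <= t <= 1 /\ y = Rabs (f t)) (sup_norm f).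
Proof.
  intros [K HK]. apply lub_of_is_lub.
  - exists K. intros y [t [Ht ->]]. auto.
  - exists (Rabs (f 0)), 0. split; [lra | reflexivity].
Qed.

Lemma sup_norm_ge f : bounded_on_I f -> forall t, -1 <= t <= 1 -> Rabs (f t) <= sup_norm f.
Proof. intros Hb t Ht. apply (sup_norm_is_lub f Hb). exists t; auto. Qed.

Lemma sup_norm_le f K : bounded_on_I f -> (forall t, -1 <= t <= 1 -> Rabs (f t) <= K) -> sup_norm f <= K.
Proof. intros Hb HK. apply (sup_norm_is_lub f Hb). intros y [t [Ht ->]]. auto. Qed.

Lemma sup_norm_nonneg f : bounded_on_I f -> 0 <= sup_norm f.
Proof.
  intros Hb. pose proof (sup_norm_ge f Hb 0 ltac:(lra)). pose proof (Rabs_pos (f 0)). lra.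
Qed.

Lemma glb_of_approx E : (exists y, E y) -> (forall y, E y -> 0 <= y) ->
  forall eps, 0 < eps -> exists y, E y /\ y < glb_of E + eps.
Proof.
  intros [y0 Hy0] Hpos eps He. unfold glb_of. set (E' := fun y => E (- y)).
  assert (Hlub : is_lub E' (lub_of E')).
  { apply lub_of_is_lub.
    - exists 0. intros y Hy. apply Hpos in Hy. lra.
    - exists (- y0). unfold E'. now rewrite Ropp_involutive. }
  apply NNPP. intros Hn.
  assert (Hub : is_upper_bound E' (lub_of E' - eps)).
  { intros z Hz. destruct (Rle_dec z (lub_of E' - eps)) as [| Hgt]; [assumption |].
    exfalso. apply Hn. exists (- z). split; [exact Hz | lra]. }
  apply (proj2 Hlub) in Hub. lra.
Qed.

Lemma le_glb_combination (EA EB : R -> Prop) a b L :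
  (exists y, EA y) -> (forall y, EA y -> 0 <= y) ->
  (exists y, EB y) -> (forall y, EB y -> 0 <= y) -> 0 <= a -> 0 <= b ->
  (forall A B, EA A -> EB B -> L <= a * A + b * B) ->
  L <= a * glb_of EA + b * glb_of EB.
Proof.
  intros HA HA0 HB HB0 Ha Hb HL.
  apply Rle_plus_epsilon. intros eps He.
  assert (He' : 0 < eps / (a + b + 1)) by (apply Rdiv_lt_0_compat; lra).
  destruct (glb_of_approx EA HA HA0 _ He') as [A [HAy HAlt]].
  destruct (glb_of_approx EB HB HB0 _ He') as [B [HBy HBlt]].
  specialize (HL A B HAy HBy).
  assert ((a + b) * (eps / (a + b + 1)) <= eps).
  { apply Rmult_le_reg_r with (a + b + 1); [lra |]. field_simplify; nra. }
  nra.
Qed.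

Lemma continuous_on_I_minus f g :
  continuous_on_I f -> continuous_on_I g -> continuous_on_I (fun t => f t - g t).
Proof.
  intros Hf Hg t Ht eps He.
  destruct (Hf t Ht (eps / 2) ltac:(lra)) as [d1 [Hd1 H1]].
  destruct (Hg t Ht (eps / 2) ltac:(lra)) as [d2 [Hd2 H2]].
  exists (Rmin d1 d2). split; [now apply Rmin_pos |].
  intros s Hs Hst. pose proof (Rmin_l d1 d2). pose proof (Rmin_r d1 d2).
  specialize (H1 s Hs ltac:(lra)). specialize (H2 s Hs ltac:(lra)).
  replace (f s - g s - (f t - g t)) with ((f s - f t) - (g s - g t)) by ring.
  eapply Rle_lt_trans; [apply Rabs_triang | rewrite Rabs_Ropp; lra].
Qed.

Lemma continuity_pt_continuous_on_I f : (forall t, continuity_pt f t) -> continuous_on_I f.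
Proof.
  intros Hc t _ eps He. destruct (Hc t eps He) as [d [Hd H]]. exists d. split; [exact Hd |].
  intros s _ Hst. destruct (Req_dec s t) as [-> | Hne].
  - unfold Rminus. now rewrite Rplus_opp_r, Rabs_R0.
  - apply H. split; [split; [exact I | auto] | exact Hst].
Qed.

Lemma is_poly_continuous_on_I n f : is_poly n f -> continuous_on_I f.
Proof. intros Hf. apply continuity_pt_continuous_on_I, (is_poly_continuous n f Hf). Qed.

Definition clamp_I (t : R) : R := Rmax (-1) (Rmin 1 t).

(* Composing with the clamp extends [f] continuously to all of [R], where the
   extreme value theorem of the standard library applies. *)
Lemma continuous_on_I_bounded f : continuous_on_I f -> bounded_on_I f.
Proof.
  intros Hf.
  assert (Hin : forall t, -1 <= clamp_I t <= 1)
    by (intros t; unfold clamp_I, Rmax, Rmin; repeat destruct Rle_dec; lra).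
  assert (Hlip : forall s t, Rabs (clamp_I s - clamp_I t) <= Rabs (s - t))
    by (intros s t; unfold clamp_I, Rmax, Rmin; repeat destruct Rle_dec; unfold Rabs;
        repeat destruct Rcase_abs; lra).
  assert (Hid : forall t, -1 <= t <= 1 -> clamp_I t = t)
    by (intros t Ht; unfold clamp_I, Rmax, Rmin; repeat destruct Rle_dec; lra).
  set (g := fun t => f (clamp_I t)).
  assert (Hg : forall t, continuity_pt g t).
  { intros t. unfold continuity_pt, continue_in, limit1_in, limit_in. simpl. intros eps He.
    destruct (Hf (clamp_I t) (Hin t) eps He) as [d [Hd H]].
    exists d. split; [exact Hd |]. intros s [_ Hs]. unfold R_dist, g in *.
    apply H; [apply Hin | pose proof (Hlip s t); lra]. }
  destruct (continuity_ab_maj g (-1) 1 ltac:(lra) (fun c _ => Hg c)) as [M1 [HM1 _]].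
  destruct (continuity_ab_min g (-1) 1 ltac:(lra) (fun c _ => Hg c)) as [M2 [HM2 _]].
  exists (Rmax (Rabs (g M1)) (Rabs (g M2))). intros t Ht.
  specialize (HM1 t Ht). specialize (HM2 t Ht). unfold g in HM1, HM2. rewrite (Hid t Ht) in HM1, HM2.
  pose proof (Rmax_l (Rabs (g M1)) (Rabs (g M2))). pose proof (Rmax_r (Rabs (g M1)) (Rabs (g M2))).
  pose proof (Rle_abs (g M1)). pose proof (Rle_abs (- g M2)). rewrite Rabs_Ropp in *.
  apply Rabs_le. unfold g in *. lra.
Qed.

Lemma Rabs_le_of_interior f a K : -1 <= a <= 1 -> continuous_on_I_at f a ->
  (forall y, -1 < y < 1 -> Rabs (f y) <= K) -> Rabs (f a) <= K.
Proof.
  intros Ha Hc HK. destruct (Rle_dec (Rabs (f a)) K) as [| Hn]; [assumption | exfalso].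
  destruct (Hc (Rabs (f a) - K) ltac:(lra)) as [d [Hd H]].
  set (m := Rmin d 1). assert (0 < m) by (apply Rmin_pos; lra).
  assert (m <= d) by apply Rmin_l. assert (m <= 1) by apply Rmin_r.
  set (y := if Rle_dec 0 a then a - m / 2 else a + m / 2).
  assert (Hy : -1 < y < 1) by (unfold y; destruct Rle_dec; lra).
  assert (Hya : Rabs (y - a) < d)
    by (unfold y; destruct Rle_dec; [rewrite Rabs_left | rewrite Rabs_right]; lra).
  specialize (H y ltac:(lra) Hya). specialize (HK y Hy).
  pose proof (Rabs_triang_inv (f a) (f y)). rewrite Rabs_minus_sym in H. lra.
Qed.

Lemma has_deriv_on_I_continuous f df :
  (forall t, -1 <= t <= 1 -> has_deriv_on_I f t (df t)) -> continuous_on_I f.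
Proof.
  intros Hd t Ht eps He. destruct (Hd t Ht 1 ltac:(lra)) as [d1 [Hd1 H1]].
  set (L := Rabs (df t) + 1). assert (HL : 0 < L) by (unfold L; pose proof (Rabs_pos (df t)); lra).
  exists (Rmin d1 (eps / L)). split; [apply Rmin_pos; [exact Hd1 | now apply Rdiv_lt_0_compat] |].
  intros s Hs Hst. pose proof (Rmin_l d1 (eps / L)). pose proof (Rmin_r d1 (eps / L)).
  destruct (Req_dec s t) as [-> | Hne]; [unfold Rminus; rewrite Rplus_opp_r, Rabs_R0; exact He |].
  specialize (H1 (s - t) ltac:(lra) ltac:(lra) ltac:(now replace (t + (s - t)) with s by ring)).
  replace (t + (s - t)) with s in H1 by ring.
  assert (Hq : Rabs ((f s - f t) / (s - t)) < L).
  { pose proof (Rabs_triang_inv ((f s - f t) / (s - t)) (df t)). unfold L. lra. }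
  assert (Hst0 : 0 < Rabs (s - t)) by (apply Rabs_pos_lt; lra).
  unfold Rdiv in Hq. rewrite Rabs_mult, Rabs_inv in Hq.
  assert (Hr : Rabs (f s - f t) < L * Rabs (s - t)).
  { apply Rmult_lt_reg_r with (/ Rabs (s - t)); [now apply Rinv_0_lt_compat |].
    rewrite Rmult_assoc, Rinv_r by lra. lra. }
  assert (L * Rabs (s - t) < L * (eps / L)) by (apply Rmult_lt_compat_l; lra).
  replace (L * (eps / L)) with eps in * by (field; lra). lra.
Qed.

Lemma has_deriv_on_I_is_derive f s l : -1 < s < 1 -> has_deriv_on_I f s l -> is_derive f s l.
Proof.
  intros Hs Hd. apply is_derive_Reals. intros eps He. destruct (Hd eps He) as [d [Hd0 H]].
  set (r := Rmin d (Rmin (1 - s) (1 + s))).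
  assert (Hr : 0 < r) by (repeat apply Rmin_pos; lra).
  exists (mkposreal r Hr). simpl. intros h Hh Hhr.
  pose proof (Rmin_l d (Rmin (1 - s) (1 + s))). pose proof (Rmin_r d (Rmin (1 - s) (1 + s))).
  pose proof (Rmin_l (1 - s) (1 + s)). pose proof (Rmin_r (1 - s) (1 + s)).
  pose proof (Rabs_def2 h r Hhr). apply H; [exact Hh | unfold r in *; lra | unfold r in *; lra].
Qed.

(* On [[-ξ_0, ξ_0]], where the [ξ_k] are the zeros of the
   Chebyshev polynomial [T_n], it follows from Bernstein's inequality because
   [sin θ >= 1/n] there; on [(ξ_0, 1)] one interpolates [p'] at the [ξ_k], where
   the Lagrange basis polynomials [T_n(x)/(x - ξ_k)] are all positive and sum to
   [T_n'(x) <= n^2]; [(-1, -ξ_0)] follows by symmetry and the endpoints by continuity. *)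
Section Markov.

Variable n : nat.
Hypothesis n_ge1 : (1 <= n)%nat.

Definition cheb_node (k : nat) : R := cos (riesz_node n k).

Lemma riesz_node_bounds k : (k < n)%nat -> 0 < riesz_node n k < PI.
Proof.
  intros Hk. pose proof (INR_n_pos n n_ge1). pose proof PI_RGT_0. pose proof (pos_INR k).
  assert (INR k + 1 <= INR n) by (rewrite <- S_INR; apply le_INR; lia).
  unfold riesz_node. split.
  - apply Rdiv_lt_0_compat; nra.
  - apply Rmult_lt_reg_r with (2 * INR n); [lra |]. field_simplify; nra.
Qed.

Lemma riesz_node_lt i j : (i < j)%nat -> riesz_node n i < riesz_node n j.
Proof.
  intros H. pose proof (INR_n_pos n n_ge1). pose proof PI_RGT_0. apply lt_INR in H.
  unfold riesz_node, Rdiv. apply Rmult_lt_compat_r; [apply Rinv_0_lt_compat; lra | nra].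
Qed.

Lemma cheb_node_inj i j : (i < n)%nat -> (j < n)%nat -> cheb_node i = cheb_node j -> i = j.
Proof.
  intros Hi Hj E. unfold cheb_node in E.
  pose proof (riesz_node_bounds i Hi). pose proof (riesz_node_bounds j Hj).
  assert (riesz_node n j <= riesz_node n i) by (apply cos_le_cos_inv; lra).
  assert (riesz_node n i <= riesz_node n j) by (apply cos_le_cos_inv; lra).
  destruct (Nat.lt_total i j) as [Hl | [Hl | Hl]]; [| exact Hl |];
    apply riesz_node_lt in Hl; lra.
Qed.

Lemma cheb_node_le_0 k : (k < n)%nat -> cheb_node k <= cheb_node 0.
Proof.
  intros Hk. destruct k as [|k]; [lra |].
  pose proof (riesz_node_bounds _ Hk). pose proof (riesz_node_bounds 0 ltac:(lia)).
  left. apply cos_decreasing_1; try lra. apply riesz_node_lt. lia.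
Qed.

Lemma cheb_node_0_bounds : 0 <= cheb_node 0 < 1.
Proof.
  pose proof (riesz_node_bounds 0 ltac:(lia)). pose proof (INR_n_pos n n_ge1). pose proof PI_RGT_0.
  assert (1 <= INR n) by (replace 1 with (INR 1) by reflexivity; apply le_INR; exact n_ge1).
  assert (riesz_node n 0 <= PI / 2).
  { unfold riesz_node. simpl INR. apply Rmult_le_reg_r with (2 * INR n); [lra |]. field_simplify; nra. }
  unfold cheb_node. split; [apply cos_ge_0; lra |].
  rewrite <- cos_0. apply cos_decreasing_1; lra.
Qed.

Lemma chebyshev_cheb_node k : chebyshev n (cheb_node k) = 0.
Proof.
  unfold cheb_node. rewrite chebyshev_cos. pose proof (INR_n_pos n n_ge1).
  unfold riesz_node.
  replace (INR n * ((2 * INR k + 1) * PI / (2 * INR n))) with (INR k * PI + PI / 2) by (field; lra).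
  rewrite cos_plus, cos_PI2, sin_PI2, sin_INR_PI. ring.
Qed.

Lemma chebyshev_deriv_cheb_node k : (k < n)%nat ->
  chebyshev_deriv n (cheb_node k) = INR n * (-1) ^ k / sin (riesz_node n k).
Proof.
  intros Hk. pose proof (riesz_node_bounds k Hk) as [H0 H1]. pose proof (sin_gt_0 _ H0 H1).
  pose proof (chebyshev_deriv_cos n (riesz_node n k)) as E. rewrite sin_n_riesz_node in E by exact n_ge1.
  unfold cheb_node. apply Rmult_eq_reg_r with (sin (riesz_node n k)); [| lra].
  rewrite E. field. lra.
Qed.

Lemma chebyshev_deriv_cheb_node_neq0 k : (k < n)%nat -> chebyshev_deriv n (cheb_node k) <> 0.
Proof.
  intros Hk. rewrite chebyshev_deriv_cheb_node by exact Hk.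
  pose proof (riesz_node_bounds k Hk) as [H0 H1]. pose proof (sin_gt_0 _ H0 H1).
  pose proof (INR_n_pos n n_ge1). assert ((-1) ^ k <> 0) by (apply pow_nonzero; lra).
  unfold Rdiv. repeat apply Rmult_integral_contrapositive_currified; try lra.
  apply Rinv_neq_0_compat. lra.
Qed.

Section ChebyshevInterpolation.

Variable G : nat -> R -> R.
Hypothesis is_poly_G : forall k, is_poly n (G k).
Hypothesis chebyshev_factor : forall k t, chebyshev n t = (t - cheb_node k) * G k t.

Lemma G_cheb_node k j : (k < n)%nat -> (j < n)%nat -> j <> k -> G k (cheb_node j) = 0.
Proof.
  intros Hk Hj Hne. pose proof (chebyshev_factor k (cheb_node j)) as E.
  rewrite chebyshev_cheb_node in E.
  symmetry in E. apply Rmult_integral in E as [E | E]; [| exact E].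
  exfalso. apply Hne, cheb_node_inj; [exact Hj | exact Hk | lra].
Qed.

Lemma G_cheb_node_diag k : G k (cheb_node k) = chebyshev_deriv n (cheb_node k).
Proof.
  destruct (is_poly_derive n (G k) (is_poly_S n _ (is_poly_G k))) as [dG [_ HdG]].
  apply (is_derive_unique_R (chebyshev n) (cheb_node k)); [| apply is_derive_chebyshev].
  eapply is_derive_eq;
    [apply is_derive_mult_R; [apply (is_derive_linear 1 (- cheb_node k)) | apply HdG]
    | intros t; rewrite chebyshev_factor with (k := k); ring | cbv beta; ring].
Qed.

Lemma rsum_G t : rsum n (fun k => G k t) = chebyshev_deriv n t.
Proof.
  apply (is_poly_eq_nodes n (fun s => rsum n (fun k => G k s)) _ cheb_node); [apply is_poly_rsum; auto | apply is_poly_chebyshev_deriv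
    | exact cheb_node_inj |].
  intros j Hj. rewrite (rsum_single n _ j Hj); [apply G_cheb_node_diag |].
  intros k Hk Hne. now apply G_cheb_node.
Qed.

Lemma cheb_interpolation q : is_poly n q -> forall t,
  q t = rsum n (fun k => q (cheb_node k) / chebyshev_deriv n (cheb_node k) * G k t).
Proof.
  intros Hq.
  apply (is_poly_eq_nodes n q
    (fun s => rsum n (fun k => q (cheb_node k) / chebyshev_deriv n (cheb_node k) * G k s)) cheb_node);
    [exact Hq | apply is_poly_rsum; intros; now apply is_poly_scal | exact cheb_node_inj |].
  intros j Hj. rewrite (rsum_single n _ j Hj).
  - rewrite G_cheb_node_diag. field. now apply chebyshev_deriv_cheb_node_neq0.
  - intros k Hk Hne. rewrite G_cheb_node; [ring | exact Hk | exact Hj | auto].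
Qed.

Lemma markov_right p dp M : is_poly (S n) p -> (forall y, is_derive p y (dp y)) ->
  (forall y, -1 <= y <= 1 -> Rabs (p y) <= M) ->
  forall x, cheb_node 0 < x < 1 -> Rabs (dp x) <= INR n ^ 2 * M.
Proof.
  intros Hp Hd HM x Hx. pose proof (INR_n_pos n n_ge1) as Hn0. pose proof cheb_node_0_bounds.
  assert (HM0 : 0 <= M) by (specialize (HM x ltac:(lra)); pose proof (Rabs_pos (p x)); lra).
  assert (HT : 0 < chebyshev n x).
  { pose proof (riesz_node_bounds 0 ltac:(lia)). pose proof (acos_bound x).
    rewrite <- (cos_acos x), chebyshev_cos by lra.
    assert (acos x < riesz_node n 0)
      by (apply cos_lt_cos_inv; [lra | lra | rewrite cos_acos by lra; unfold cheb_node in Hx; lra]).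
    assert (INR n * riesz_node n 0 = PI / 2) by (unfold riesz_node; simpl INR; field; lra).
    apply cos_gt_0; nra. }
  assert (HG0 : forall k, (k < n)%nat -> 0 <= G k x).
  { intros k Hk. pose proof (chebyshev_factor k x). pose proof (cheb_node_le_0 k Hk).
    left. apply Rmult_lt_reg_l with (x - cheb_node k); lra. }
  assert (Hcoef : forall k, (k < n)%nat ->
            Rabs (dp (cheb_node k) / chebyshev_deriv n (cheb_node k)) <= M).
  { intros k Hk. rewrite chebyshev_deriv_cheb_node by exact Hk.
    pose proof (riesz_node_bounds k Hk) as [H0 H1]. pose proof (sin_gt_0 _ H0 H1).
    pose proof (bernstein n p dp M n_ge1 Hp Hd HM (riesz_node n k)) as B.
    assert ((-1) ^ k <> 0) by (apply pow_nonzero; lra).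
    replace (dp (cheb_node k) / (INR n * (-1) ^ k / sin (riesz_node n k)))
      with (sin (riesz_node n k) * dp (cheb_node k) / ((-1) ^ k * INR n)) by (field; lra).
    unfold Rdiv. rewrite Rabs_mult, Rabs_inv, (Rabs_mult ((-1) ^ k)), pow_1_abs, Rmult_1_l.
    rewrite (Rabs_pos_eq (INR n)) by lra.
    apply (Rmult_le_reg_r (INR n)); [exact Hn0 |]. rewrite Rmult_assoc, Rinv_l, Rmult_1_r by lra.
    unfold cheb_node. lra. }
  rewrite (cheb_interpolation dp (is_poly_derive_unique n p dp Hp Hd) x).
  eapply Rle_trans; [apply Rabs_rsum_le |].
  apply Rle_trans with (rsum n (fun k => M * G k x)).
  - apply rsum_le. intros k Hk. rewrite Rabs_mult, (Rabs_pos_eq (G k x)) by auto.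
    apply Rmult_le_compat_r; auto.
  - rewrite rsum_scal, rsum_G. pose proof (chebyshev_deriv_le n x ltac:(lra)). nra.
Qed.

End ChebyshevInterpolation.

Lemma chebyshev_quotients : exists G : nat -> R -> R,
  (forall k, is_poly n (G k)) /\ forall k t, chebyshev n t = (t - cheb_node k) * G k t.
Proof.
  destruct (choice (fun k g => is_poly n g /\ forall t, chebyshev n t = (t - cheb_node k) * g t))
    as [G HG].
  - intros k. destruct (is_poly_factor n _ (cheb_node k) (is_poly_chebyshev n)) as [g [Hg E]].
    exists g. split; [exact Hg |]. intros t. rewrite E, chebyshev_cheb_node. ring.
  - exists G. split; intros k; apply HG.
Qed.

Lemma sin_riesz_node_0_ge : 1 / INR n <= sin (riesz_node n 0).
Proof.
  pose proof PI2_3_2. pose proof PI_4. pose proof (INR_n_pos n n_ge1).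
  assert (E : riesz_node n 0 = PI / (2 * INR n)) by (unfold riesz_node; simpl INR; field; lra).
  rewrite E. destruct (Nat.eq_dec n 1) as [-> | Hne].
  - simpl INR. replace (PI / (2 * 1)) with (PI / 2) by field. rewrite sin_PI2. lra.
  - assert (2 <= INR n) by (replace 2 with (INR 2) by reflexivity; apply le_INR; lia).
    set (a := PI / (2 * INR n)).
    assert (0 < a <= 1).
    { unfold a. split; [apply Rdiv_lt_0_compat; lra |].
      apply Rmult_le_reg_r with (2 * INR n); [lra |]. field_simplify; lra. }
    (* Taylor: sin a >= a - a^3/6 >= 5a/6 on (0, 1] *)
    pose proof (sin_bound a 0 ltac:(lra) ltac:(lra)) as [Hs _].
    replace (sin_approx a (2 * 0 + 1)) with (a - a ^ 3 / 6) in Hs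
      by (unfold sin_approx, sin_term; simpl; field).
    assert (1 / INR n <= 5 * a / 6).
    { unfold a. apply Rmult_le_reg_r with (12 * INR n); [lra |]. field_simplify; lra. }
    nra.
Qed.

Lemma markov_middle p dp M : is_poly (S n) p -> (forall y, is_derive p y (dp y)) ->
  (forall y, -1 <= y <= 1 -> Rabs (p y) <= M) ->
  forall x, - cheb_node 0 <= x <= cheb_node 0 -> Rabs (dp x) <= INR n ^ 2 * M.
Proof.
  intros Hp Hd HM x Hx. pose proof (INR_n_pos n n_ge1). pose proof cheb_node_0_bounds.
  pose proof (riesz_node_bounds 0 ltac:(lia)). pose proof (acos_bound x).
  set (a := acos x) in *. assert (Ha : cos a = x) by (apply cos_acos; lra).
  assert (riesz_node n 0 <= a) by (apply cos_le_cos_inv; unfold cheb_node in *; lra).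
  assert (a <= PI - riesz_node n 0)
    by (apply cos_le_cos_inv; [lra | lra | rewrite Rtrigo_facts.cos_pi_minus; unfold cheb_node in *; lra]).
  assert (Hs : sin (riesz_node n 0) <= sin a).
  { destruct (Rle_lt_dec a (PI / 2)).
    - apply sin_incr_1; lra.
    - rewrite <- (sin_PI_x a). apply sin_incr_1; lra. }
  pose proof sin_riesz_node_0_ge. assert (0 < 1 / INR n) by (apply Rdiv_lt_0_compat; lra).
  pose proof (bernstein n p dp M n_ge1 Hp Hd HM a) as B. rewrite Ha in B.
  rewrite Rabs_mult, (Rabs_pos_eq (sin a)) in B by lra.
  assert (1 <= INR n * sin a).
  { apply Rle_trans with (INR n * (1 / INR n)); [right; field; lra |].
    apply Rmult_le_compat_l; lra. }
  pose proof (Rabs_pos (dp x)). nra.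
Qed.

Theorem markov p dp M : is_poly (S n) p -> (forall y, is_derive p y (dp y)) ->
  (forall y, -1 <= y <= 1 -> Rabs (p y) <= M) ->
  forall x, -1 <= x <= 1 -> Rabs (dp x) <= INR n ^ 2 * M.
Proof.
  intros Hp Hd HM. destruct chebyshev_quotients as [G [HGp HG]].
  pose proof cheb_node_0_bounds.
  assert (Hint : forall x, -1 < x < 1 -> Rabs (dp x) <= INR n ^ 2 * M).
  { intros x Hx. destruct (Rlt_le_dec (cheb_node 0) x); [now apply (markov_right G HGp HG p) |].
    destruct (Rlt_le_dec x (- cheb_node 0)); [| apply (markov_middle p); auto].
    assert (Hr : Rabs (- dp (- - x)) <= INR n ^ 2 * M).
    { apply (markov_right G HGp HG (fun t => p (- t)) (fun t => - dp (- t)));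
        [now apply is_poly_comp_opp | | intros y Hy; apply HM; lra | lra].
      intros y. eapply is_derive_eq;
        [apply (is_derive_comp_R p (fun t => -1 * t + 0)); [apply Hd | apply is_derive_linear]
        | intros; cbv beta; f_equal; ring |].
      cbv beta. replace (-1 * y + 0) with (- y) by ring. ring. }
    now rewrite Ropp_involutive, Rabs_Ropp in Hr. }
  intros x Hx. apply (Rabs_le_of_interior dp x _ Hx); [| exact Hint].
  apply (is_poly_continuous_on_I n); [| exact Hx]. now apply (is_poly_derive_unique n p).
Qed.

End Markov.

Lemma is_poly_mul_2 n f g : is_poly n f -> is_poly 2 g -> is_poly (S n) (fun t => g t * f t).
Proof.
  intros Hf [c Hc]. apply (is_poly_ext _ (fun t => (c 1%nat * t + c O) * f t)).
  - intros t. rewrite Hc. unfold poly_fun. simpl. ring.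
  - now apply is_poly_mul_affine.
Qed.

Lemma is_poly_prod m (F : nat -> R -> R) : (forall j, (j <= m)%nat -> is_poly 2 (F j)) ->
  is_poly (S (S m)) (fun t => prod_f_R0 (fun j => F j t) m).
Proof.
  induction m as [|m IH]; intros H; [apply H; lia |].
  apply (is_poly_ext _ (fun t => F (S m) t * prod_f_R0 (fun j => F j t) m)); [intros; simpl; ring |].
  apply is_poly_mul_2; [apply IH; auto | apply H; lia].
Qed.

Lemma is_poly_prod_but_one m i (F : nat -> R -> R) : (i <= m)%nat ->
  (forall j, (j <= m)%nat -> j <> i -> is_poly 2 (F j)) -> (forall t, F i t = 1) ->
  is_poly (S m) (fun t => prod_f_R0 (fun j => F j t) m).
Proof.
  induction m as [|m IH]; intros Hi H H1.
  - replace i with O in H1 by lia. apply (is_poly_ext _ (fun _ => 1)); [intros; simpl; auto |].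
    apply is_poly_const.
  - apply (is_poly_ext _ (fun t => F (S m) t * prod_f_R0 (fun j => F j t) m)); [intros; simpl; ring |].
    destruct (Nat.eq_dec i (S m)) as [-> | Hne].
    + apply (is_poly_ext _ (fun t => prod_f_R0 (fun j => F j t) m)); [intros; rewrite H1; ring |].
      apply is_poly_prod. intros; apply H; lia.
    + apply is_poly_mul_2; [apply IH; auto; lia | apply H; lia].
Qed.

Lemma prod_f_R0_1 m F : (forall j, (j <= m)%nat -> F j = 1) -> prod_f_R0 F m = 1.
Proof.
  induction m as [|m IH]; intros H; simpl; [apply H; lia |].
  rewrite IH, H; [ring | lia | intros; apply H; lia].
Qed.

Lemma prod_f_R0_0 m F j : (j <= m)%nat -> F j = 0 -> prod_f_R0 F m = 0.
Proof.
  induction m as [|m IH]; intros Hj H; simpl; [now replace j with O in H by lia |].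
  destruct (Nat.eq_dec j (S m)) as [-> | Hne]; [rewrite H; ring |].
  rewrite IH; [ring | lia | exact H].
Qed.

Lemma is_poly_lagrange N tau i : (i <= N)%nat -> is_poly (S N) (lagrange N tau i).
Proof.
  intros Hi. unfold lagrange.
  apply (is_poly_prod_but_one N i (fun j t => if Nat.eqb j i then 1 else (t - tau j) / (tau i - tau j)));
    [exact Hi | | intros; now rewrite Nat.eqb_refl].
  intros j Hj Hne. destruct (Nat.eqb_spec j i) as [| _]; [contradiction |].
  apply (is_poly_ext _ (fun t => (/ (tau i - tau j) * t + - tau j / (tau i - tau j)) * 1));
    [intros; unfold Rdiv; ring |].
  apply is_poly_mul_affine, is_poly_const.
Qed.

Section Lagrange.

Variable N : nat.
Variable tau : nat -> R.
Hypothesis tau_inj : forall i j, (i <= N)%nat -> (j <= N)%nat -> tau i = tau j -> i = j.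

Lemma lagrange_node i k : (i <= N)%nat -> (k <= N)%nat ->
  lagrange N tau i (tau k) = if Nat.eqb k i then 1 else 0.
Proof.
  intros Hi Hk. unfold lagrange. destruct (Nat.eqb_spec k i) as [-> | Hne].
  - apply prod_f_R0_1. intros j Hj. destruct (Nat.eqb_spec j i) as [| Hji]; [reflexivity |].
    assert (tau i - tau j <> 0) by (intros E; apply Hji, tau_inj; lra || lia).
    field. assumption.
  - apply (prod_f_R0_0 _ _ k Hk). rewrite (proj2 (Nat.eqb_neq k i) Hne).
    unfold Rminus. rewrite Rplus_opp_r. unfold Rdiv. ring.
Qed.

Lemma lagrange_interpolation f : is_poly (S N) f ->
  forall t, f t = rsum (S N) (fun k => f (tau k) * lagrange N tau k t).
Proof.
  intros Hf.
  apply (is_poly_eq_nodes (S N) f (fun s => rsum (S N) (fun k => f (tau k) * lagrange N tau k s)) tau);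
    [exact Hf | apply is_poly_rsum; intros; apply is_poly_scal, is_poly_lagrange; lia
    | intros i j Hi Hj E; apply tau_inj; [lia | lia | exact E] |].
  intros j Hj. rewrite (rsum_single (S N) _ j Hj).
  - rewrite lagrange_node, Nat.eqb_refl by lia. ring.
  - intros k Hk Hne. rewrite lagrange_node by lia.
    rewrite (proj2 (Nat.eqb_neq j k)) by auto. ring.
Qed.

End Lagrange.

Lemma bounded_on_I_rsum_abs m (F : nat -> R -> R) : (forall j, (j < m)%nat -> bounded_on_I (F j)) ->
  bounded_on_I (fun t => rsum m (fun j => Rabs (F j t))).
Proof.
  induction m as [|m IH]; intros H; [exists 0; intros; simpl; rewrite Rabs_R0; lra |].
  destruct IH as [K1 H1]; [intros; apply H; lia |]. destruct (H m ltac:(lia)) as [K2 H2].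
  exists (K1 + K2). intros t Ht. simpl. specialize (H1 t Ht). specialize (H2 t Ht).
  assert (0 <= rsum m (fun j => Rabs (F j t))) by (apply rsum_nonneg; intros; apply Rabs_pos).
  rewrite Rabs_pos_eq in H1 by assumption. rewrite Rabs_pos_eq by (pose proof (Rabs_pos (F m t)); lra).
  lra.
Qed.

Lemma lebesgue_const_ge N tau t : -1 <= t <= 1 ->
  rsum (S N) (fun j => Rabs (lagrange N tau j t)) <= lebesgue_const N tau.
Proof.
  intros Ht. unfold lebesgue_const.
  destruct (bounded_on_I_rsum_abs (S N) (lagrange N tau)) as [K HK].
  { intros j Hj. apply continuous_on_I_bounded, (is_poly_continuous_on_I (S N)), is_poly_lagrange. lia. }
  rewrite <- sum_f_R0_rsum. apply lub_of_is_lub; [| | exists t; auto].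
  - exists K. intros y [s [Hs ->]]. rewrite sum_f_R0_rsum.
    specialize (HK s Hs). pose proof (Rle_abs (rsum (S N) (fun j => Rabs (lagrange N tau j s)))). lra.
  - exists (sum_f_R0 (fun j => Rabs (lagrange N tau j 0)) N), 0. split; [lra | reflexivity].
Qed.

Lemma lebesgue_const_nonneg N tau : 0 <= lebesgue_const N tau.
Proof.
  eapply Rle_trans; [| apply (lebesgue_const_ge N tau 0); lra].
  apply rsum_nonneg. intros; apply Rabs_pos.
Qed.

Lemma increasing_nodes_lt N (tau : nat -> R) : (forall i, (i < N)%nat -> tau i < tau (S i)) ->
  forall i j, (i < j)%nat -> (j <= N)%nat -> tau i < tau j.
Proof.
  intros Hmono i j Hij. induction Hij as [| j Hij IH]; intros Hj; [apply Hmono; lia |].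
  apply Rlt_trans with (tau j); [apply IH; lia | apply Hmono; lia].
Qed.

Lemma increasing_nodes_inj N (tau : nat -> R) : (forall i, (i < N)%nat -> tau i < tau (S i)) ->
  forall i j, (i <= N)%nat -> (j <= N)%nat -> tau i = tau j -> i = j.
Proof.
  intros Hmono i j Hi Hj E.
  destruct (Nat.lt_total i j) as [H | [H | H]]; [| exact H |];
    apply (increasing_nodes_lt N tau Hmono) in H; lra || lia.
Qed.

Lemma increasing_nodes_in_I N (tau : nat -> R) : -1 <= tau O -> tau N <= 1 ->
  (forall i, (i < N)%nat -> tau i < tau (S i)) -> forall k, (k <= N)%nat -> -1 <= tau k <= 1.
Proof.
  intros H0 HN Hmono k Hk. pose proof (increasing_nodes_lt N tau Hmono) as Hlt. split.
  - destruct k as [|k]; [lra |]. specialize (Hlt O (S k) ltac:(lia) Hk). lra.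
  - destruct (Nat.eq_dec k N) as [-> | Hne]; [lra |]. specialize (Hlt k N ltac:(lia) ltac:(lia)). lra.
Qed.

Lemma bounded_on_I_sub_poly_eval N x p : continuous_on_I x ->
  bounded_on_I (fun t => x t - poly_eval N p t).
Proof.
  intros Hx. apply continuous_on_I_bounded, continuous_on_I_minus; [exact Hx |].
  apply (is_poly_continuous_on_I _ _ (is_poly_poly_eval N p)).
Qed.

Lemma bounded_on_I_sub_poly_deriv N dx q : continuous_on_I dx ->
  bounded_on_I (fun t => dx t - poly_deriv N q t).
Proof.
  intros Hdx. apply continuous_on_I_bounded, continuous_on_I_minus; [exact Hdx |].
  apply (is_poly_continuous_on_I _ _ (is_poly_poly_deriv N q)).
Qed.

Lemma lebesgue_inequality N tau x cN p t :
  (forall i j, (i <= N)%nat -> (j <= N)%nat -> tau i = tau j -> i = j) ->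
  (forall k, (k <= N)%nat -> -1 <= tau k <= 1) ->
  (forall k, (k <= N)%nat -> poly_eval N cN (tau k) = x (tau k)) ->
  continuous_on_I x -> -1 <= t <= 1 ->
  Rabs (x t - poly_eval N cN t)
  <= (1 + lebesgue_const N tau) * sup_norm (fun s => x s - poly_eval N p s).
Proof.
  intros Hinj Hin Hint Hx Ht. pose proof (bounded_on_I_sub_poly_eval N x p Hx) as Hb.
  set (Sp := sup_norm (fun s => x s - poly_eval N p s)).
  pose proof (sup_norm_ge _ Hb) as HS. fold Sp in HS.
  assert (E : poly_eval N cN t - poly_eval N p t
              = rsum (S N) (fun k => (x (tau k) - poly_eval N p (tau k)) * lagrange N tau k t)).
  { rewrite (lagrange_interpolation N tau Hinj (fun s => poly_eval N cN s - poly_eval N p s))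
      by (apply is_poly_minus; apply is_poly_poly_eval).
    apply rsum_ext. intros k Hk. rewrite Hint by lia. reflexivity. }
  assert (Hsum : Rabs (poly_eval N cN t - poly_eval N p t) <= Sp * lebesgue_const N tau).
  { rewrite E. eapply Rle_trans; [apply Rabs_rsum_le |].
    eapply Rle_trans;
      [| apply Rmult_le_compat_l; [apply (sup_norm_nonneg _ Hb) | apply (lebesgue_const_ge N tau t Ht)]].
    rewrite <- rsum_scal. apply rsum_le. intros k Hk. rewrite Rabs_mult.
    apply Rmult_le_compat_r; [apply Rabs_pos | apply HS, Hin; lia]. }
  replace (x t - poly_eval N cN t)
    with ((x t - poly_eval N p t) - (poly_eval N cN t - poly_eval N p t)) by ring.
  eapply Rle_trans; [apply Rabs_triang |]. rewrite Rabs_Ropp.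
  specialize (HS t Ht). lra.
Qed.

Lemma Rabs_le_of_deriv_le f df K : f 0 = 0 -> continuous_on_I f ->
  (forall s, -1 < s < 1 -> is_derive f s (df s)) ->
  (forall s, -1 <= s <= 1 -> Rabs (df s) <= K) ->
  forall t, -1 <= t <= 1 -> Rabs (f t) <= K.
Proof.
  intros H0 Hc Hd HK t Ht. apply (Rabs_le_of_interior f t K Ht (Hc t Ht)). clear t Ht. intros t Ht.
  assert (Hbetween : forall s, Rmin 0 t <= s <= Rmax 0 t -> -1 < s < 1)
    by (intros s; unfold Rmin, Rmax; destruct Rle_dec; lra).
  destruct (MVT_gen f 0 t df) as [m [Hm E]].
  - intros s Hs. apply Hd, Hbetween. lra.
  - intros s Hs. apply continuity_pt_filterlim, (ex_derive_continuous f s).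
    eexists. apply Hd, Hbetween, Hs.
  - rewrite H0, !Rminus_0_r in E. rewrite E, Rabs_mult.
    specialize (HK m ltac:(pose proof (Hbetween m Hm); lra)).
    assert (Rabs t <= 1) by (apply Rabs_le; lra).
    pose proof (Rabs_pos t). pose proof (Rabs_pos (df m)). nra.
Qed.

Lemma sub_poly_eval_le N x dx q :
  (forall t, -1 <= t <= 1 -> has_deriv_on_I x t (dx t)) -> continuous_on_I dx ->
  forall t, -1 <= t <= 1 ->
  Rabs (x t - poly_eval N q t - (x 0 - poly_eval N q 0)) <= sup_norm (fun s => dx s - poly_deriv N q s).
Proof.
  intros Hdx Hcdx. set (c := x 0 - poly_eval N q 0).
  apply (Rabs_le_of_deriv_le _ (fun t => dx t - poly_deriv N q t)); [unfold c; ring | | |].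
  - apply continuous_on_I_minus;
      [| apply continuity_pt_continuous_on_I; intros; apply continuity_pt_const; now intros ? ?].
    apply continuous_on_I_minus;
      [exact (has_deriv_on_I_continuous x dx Hdx) | apply (is_poly_continuous_on_I _ _ (is_poly_poly_eval N q))].
  - intros s Hs. eapply is_derive_eq;
      [apply is_derive_plus_R; [apply is_derive_plus_R;
         [apply has_deriv_on_I_is_derive, Hdx; lra | apply (is_derive_scal_R (poly_eval N q) (-1)), is_derive_poly_eval]
       | apply (is_derive_const_R (- c))]
      | intros; cbv beta; ring | cbv beta; ring].
  - apply sup_norm_ge, bounded_on_I_sub_poly_deriv, Hcdx.
Qed.

Lemma deriv_interpolation_error_le N tau x dx cN q p :
  (1 <= N)%nat ->
  (forall i j, (i <= N)%nat -> (j <= N)%nat -> tau i = tau j -> i = j) ->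
  (forall k, (k <= N)%nat -> -1 <= tau k <= 1) ->
  (forall t, -1 <= t <= 1 -> has_deriv_on_I x t (dx t)) ->
  continuous_on_I dx ->
  (forall k, (k <= N)%nat -> poly_eval N cN (tau k) = x (tau k)) ->
  sup_norm (fun t => dx t - poly_deriv N cN t)
  <= (1 + 2 * INR N ^ 2) * sup_norm (fun t => dx t - poly_deriv N q t)
     + INR N ^ 2 * (1 + lebesgue_const N tau) * sup_norm (fun t => x t - poly_eval N p t).
Proof.
  intros HN Hinj Hin Hdx Hcdx Hint.
  pose proof (has_deriv_on_I_continuous x dx Hdx) as Hcx.
  set (Sq := sup_norm (fun t => dx t - poly_deriv N q t)).
  set (Sp := sup_norm (fun t => x t - poly_eval N p t)).
  set (Lam := lebesgue_const N tau).
  set (h := fun t => poly_eval N q t + (x 0 - poly_eval N q 0) - poly_eval N cN t).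
  assert (Hh : forall t, -1 <= t <= 1 -> Rabs (h t) <= Sq + (1 + Lam) * Sp).
  { intros t Ht. pose proof (lebesgue_inequality N tau x cN p t Hinj Hin Hint Hcx Ht) as Hx.
    pose proof (sub_poly_eval_le N x dx q Hdx Hcdx t Ht) as Hq. fold Sq in Hq. fold Sp Lam in Hx.
    replace (h t) with (- (x t - poly_eval N q t - (x 0 - poly_eval N q 0)) + (x t - poly_eval N cN t))
      by (unfold h; ring).
    eapply Rle_trans; [apply Rabs_triang |]. rewrite Rabs_Ropp. lra. }
  assert (Hdh : forall t, is_derive h t (poly_deriv N q t - poly_deriv N cN t)).
  { intros t. eapply is_derive_eq;
      [apply is_derive_plus_R;
         [apply is_derive_plus_R; [apply (is_derive_poly_eval N q) | apply (is_derive_const_R (x 0 - poly_eval N q 0))]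
         | apply (is_derive_scal_R (poly_eval N cN) (-1)), is_derive_poly_eval]
      | intros; unfold h; cbv beta; ring | ring]. }
  assert (Hph : is_poly (S N) h).
  { apply is_poly_minus; [apply is_poly_plus | apply is_poly_poly_eval].
    - apply is_poly_poly_eval.
    - apply (is_poly_le 1); [lia | apply is_poly_const]. }
  pose proof (markov N HN h _ _ Hph Hdh Hh) as Hmarkov.
  pose proof (bounded_on_I_sub_poly_deriv N dx q Hcdx) as Hbq.
  apply sup_norm_le; [now apply bounded_on_I_sub_poly_deriv |]. intros t Ht.
  replace (dx t - poly_deriv N cN t)
    with ((dx t - poly_deriv N q t) + (poly_deriv N q t - poly_deriv N cN t)) by ring.
  eapply Rle_trans; [apply Rabs_triang |].
  specialize (Hmarkov t Ht). pose proof (sup_norm_ge _ Hbq t Ht) as Hq. fold Sq in Hq.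
  pose proof (sup_norm_nonneg _ Hbq) as Hq0. fold Sq in Hq0. pose proof (pow2_ge_0 (INR N)). nra.
Qed.

Theorem proposition2p1 (N : nat) (tau : nat -> R) (x dx : R -> R) (cN : nat -> R) :
  (1 <= N)%nat ->
  -1 <= tau 0%nat ->
  tau N <= 1 ->
  (forall i, (i < N)%nat -> tau i < tau (S i)) ->
  (forall t, -1 <= t <= 1 -> has_deriv_on_I x t (dx t)) ->
  (forall t, -1 <= t <= 1 -> continuous_on_I_at dx t) ->
  (forall k, (k <= N)%nat -> poly_eval N cN (tau k) = x (tau k)) ->
  sup_norm (fun t => dx t - poly_deriv N cN t)
  <= (1 + 2 * INR N ^ 2) *
       glb_of (fun y => exists q : nat -> R,
                  y = sup_norm (fun t => dx t - poly_deriv N q t))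
     + INR N ^ 2 * (1 + lebesgue_const N tau) *
       glb_of (fun y => exists p : nat -> R,
                  y = sup_norm (fun t => x t - poly_eval N p t)).
Proof.
  intros HN H0 HN1 Hmono Hdx Hcdx Hint.
  pose proof (has_deriv_on_I_continuous x dx Hdx) as Hcx.
  apply le_glb_combination.
  - exists (sup_norm (fun t => dx t - poly_deriv N (fun _ => 0) t)), (fun _ => 0). reflexivity.
  - intros y [q ->]. now apply sup_norm_nonneg, bounded_on_I_sub_poly_deriv.
  - exists (sup_norm (fun t => x t - poly_eval N (fun _ => 0) t)), (fun _ => 0). reflexivity.
  - intros y [p ->]. now apply sup_norm_nonneg, bounded_on_I_sub_poly_eval.
  - pose proof (pow2_ge_0 (INR N)). lra.
  - apply Rmult_le_pos; [apply pow2_ge_0 |]. pose proof (lebesgue_const_nonneg N tau). lra.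
  - intros A B [q ->] [p ->]. apply deriv_interpolation_error_le; auto.
    + exact (increasing_nodes_inj N tau Hmono).
    + exact (increasing_nodes_in_I N tau H0 HN1 Hmono).
Qed.
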